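(* Let $\lambda>0$, $f:\mathbb{R}^n\to\mathbb{R}$ twice continuously differentiable, $\varphi=f+\lambda\|\cdot\|_1$, and $x^0$ with $\mathcal{L}_\varphi(x^0)$ bounded and $f$ twice uniformly Lipschitz continuously differentiable on an open neighborhood of it. Suppose that at iteration $k$ of PGN2CM (described in the context) a Newton-CG step is invoked and the Capped CG method returns $d_{\rm type}=\mathrm{SOL}$. Define $g^{k+1}_{\neq0\varepsilon}:=(g(x^{k+1}))_{I^{k\varepsilon}_{\neq0}}$, where $I^{k\varepsilon}_{\neq0}=\{i:|x^k_i|>\varepsilon_g^{1/2}\}$. Then $j_k<+\infty$ and $$\varphi(x^k)-\varphi(x^{k+1})\ge c_{sol}\min\{\|g^{k+1}_{\neq0\varepsilon}\|^2\varepsilon_h^{-1},\varepsilon_h^3,\varepsilon_g\varepsilon_h\},$$ where $c_{sol}=\eta\min\Big\{\big(\frac{4}{\sqrt{(\zeta+4\hat\tau)^2+8L_H}+(\zeta+4\hat\tau)}\big)^2,\frac{9(1-\zeta-2\eta)^2\theta^2}{L_H^2},\theta^2,\frac{(1-\zeta)^2\theta^2}{4\max\{L_H/3,2\eta\}^2}\Big\}$.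
   Context: Constants $L_g,L_H,U_g>0$ with, for $x,y\in\mathcal{L}_\varphi(x^0)=\{x:\varphi(x)\le\varphi(x^0)\}$: $\|\nabla^2f(x)(y-x)-(\nabla f(y)-\nabla f(x))\|\le\frac{L_H}2\|y-x\|^2$, $f(y)\le f(x)+\nabla f(x)^\top(y-x)+\frac12(y-x)^\top\nabla^2f(x)(y-x)+\frac{L_H}6\|y-x\|^3$, $\|\nabla f(x)\|\le U_g$, $\|\nabla^2f(x)\|\le L_g$. $\mathrm{sgn}(0)=1$. $g(x)_i=(\nabla f(x))_i+\lambda$ if $x_i>0$, $(\nabla f(x))_i-\lambda$ if $x_i<0$, $(\nabla f(x))_i-\min\{\max\{-\lambda,(\nabla f(x))_i\},\lambda\}$ if $x_i=0$. For $x$: $I^\varepsilon_0=\{i:|x_i|\le\varepsilon_g^{1/2}\}$, $I^\varepsilon_{\neq0}=\{i:|x_i|>\varepsilon_g^{1/2}\}$; $g^\varepsilon(x)_i=(\nabla f(x))_i+\lambda$ if $x_i>\varepsilon_g^{1/2}$, $(\nabla f(x))_i-\lambda$ if $x_i<-\varepsilon_g^{1/2}$, $(\nabla f(x))_i-\min\{\max\{-\lambda-\varepsilon_g^{3/4},(\nabla f(x))_i\},\lambda+\varepsilon_g^{3/4}\}$ otherwise. Capped CG (inputs symmetric $H$, $g$, $\epsilon$, $\zeta\in(0,1)$, $\delta$, $\bar\tau$, $M\ge0$): $\bar H=H+\bar\tau\|g\|^\delta I$, $\kappa=\frac{M+\bar\tau\|g\|^\delta}\epsilon$, $\hat\zeta=\frac\zeta{3\kappa}$,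 $\tau=\frac{\sqrt\kappa}{\sqrt\kappa+1}$, $T=\frac{4\kappa^4}{(1-\sqrt\tau)^2}$, $y_0=0,r_0=g,p_0=-g$; if $p_0^\top\bar Hp_0<\epsilon\|p_0\|^2$ return $(p_0,\mathrm{NC})$; if $\|Hp_0\|>M\|p_0\|$ update $M=\|Hp_0\|/\|p_0\|$ and $\kappa,\hat\zeta,\tau,T$. Loop: $\alpha_j=\|r_j\|^2/p_j^\top\bar Hp_j$, $y_{j+1}=y_j+\alpha_jp_j$, $r_{j+1}=r_j+\alpha_j\bar Hp_j$, $\beta_{j+1}=\|r_{j+1}\|^2/\|r_j\|^2$, $p_{j+1}=-r_{j+1}+\beta_{j+1}p_j$, $j\leftarrow j+1$; update $M$ whenever $\|Hv\|>M\|v\|$ for $v\in\{p_j,y_j,r_j\}$; then if $y_j^\top\bar Hy_j<\epsilon\|y_j\|^2$ return $(y_j,\mathrm{NC})$; elif $\|r_j\|\le\hat\zeta\|r_0\|$ return $(y_j,\mathrm{SOL})$; elif $p_j^\top\bar Hp_j<\epsilon\|p_j\|^2$ return $(p_j,\mathrm{NC})$; elif $\|r_j\|>\sqrt T\tau^{j/2}\|r_0\|$, compute $y_{j+1}$, find $i<j$ with $(y_{j+1}-y_i)^\top\bar H(y_{j+1}-y_i)<\epsilon\|y_{j+1}-y_i\|^2$ and return $(y_{j+1}-y_i,\mathrm{NC})$. Newton-CG step of PGN2CM (parameters $0<\varepsilon_g,\varepsilon_h<1$, $\delta\in[0,1]$, $\hat\tau\ge1$, $\zeta\in(0,1)$,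 $\eta\in(0,\frac{1-\zeta}2)$, $\theta\in(0,1)$), invoked at $x^k$ when [$I^\varepsilon_0(x^k)=\emptyset$ or $g^\varepsilon(x^k)$ vanishes on it], $I^{k\varepsilon}_{\neq0}\neq\emptyset$ and $\|g^\varepsilon(x^k)_{I^{k\varepsilon}_{\neq0}}\|>\varepsilon_g$: with $H^k_{\neq0\varepsilon}=(\nabla^2f(x^k))_{I^{k\varepsilon}_{\neq0}}$, $g^k_{\neq0\varepsilon}=g^\varepsilon(x^k)_{I^{k\varepsilon}_{\neq0}}$, $\tau_k\in[\frac{2\varepsilon_h}{\|g^k_{\neq0\varepsilon}\|^\delta},\frac{2\hat\tau\varepsilon_h}{\|g^k_{\neq0\varepsilon}\|^\delta}]$, call Capped CG$(H^k_{\neq0\varepsilon},g^k_{\neq0\varepsilon},\varepsilon_h,\zeta,\delta,\tau_k,M)$ to get $(d,d_{\rm type})$; $d^k=0$ on $I^\varepsilon_0(x^k)$, $d^k_{I^{k\varepsilon}_{\neq0}}=d$ if SOL (and $-\mathrm{sgn}(d^\top g^k_{\neq0\varepsilon})\frac{|d^\top H^k_{\neq0\varepsilon}d|}{\|d\|^2}\frac d{\|d\|}$ if NC); $x^{k+1}=x^k+\theta^{j_k}d^k$, $j_k$ the smallest nonnegative integer $j$ with $\varphi(x^k+\theta^jd^k)<\varphi(x^k)-\eta\theta^{2j}\varepsilon_h\|d^k\|^2$. The iterates lie in $\mathcal{L}_\varphi(x^0)$. *)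

From HB Require Import structures.
From mathcomp Require Import all_boot all_order all_algebra.
From mathcomp Require Import all_classical all_reals all_analysis.
Set Implicit Arguments. Unset Strict Implicit. Unset Printing Implicit Defensive.
Import Order.TTheory GRing.Theory Num.Theory.
Import numFieldNormedType.Exports.
Local Open Scope ring_scope.

Section PGN2CM.
Variable R : realType.

Definition dotv m (u v : 'rV[R]_m) : R := (u *m v^T) 0 0.
Definition nrm m (v : 'rV[R]_m) : R := Num.sqrt (dotv v v).
Definition norm1 m (v : 'rV[R]_m) : R := \sum_i `|v 0 i|.
Definition mv m (H : 'M[R]_m) (v : 'rV[R]_m) : 'rV[R]_m := (H *m v^T)^T.
Definition quad m (H : 'M[R]_m) (v : 'rV[R]_m) : R := dotv v (mv H v).
(* sgn with sgn(0) = 1 *)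
Definition sgn (x : R) : R := if 0 <= x then 1 else -1.

(** A run is described by its iterates y_j, r_j, p_j and the value M_j of the
    (possibly updated) parameter M after the updates of iteration j. *)
Definition updM m (H : 'M[R]_m) (M : R) (v : 'rV[R]_m) : R :=
  if M * nrm v < nrm (mv H v) then nrm (mv H v) / nrm v else M.

Definition CappedCG_SOL m (H : 'M[R]_m) (g : 'rV[R]_m) (eps zeta delta taubar M0 : R)
    (d : 'rV[R]_m) : Prop :=
  let shift := taubar * (nrm g) `^ delta in
  let Hbar := H + shift%:M in
  let kappa (M : R) := (M + shift) / eps in
  let zhat (M : R) := zeta / (3 * kappa M) in
  let tau (M : R) := Num.sqrt (kappa M) / (Num.sqrt (kappa M) + 1) in
  let T (M : R) := 4 * kappa M ^+ 4 / (1 - Num.sqrt (tau M)) ^+ 2 in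
  exists (y r p : nat -> 'rV[R]_m) (M : nat -> R) (J : nat),
    [/\ y 0%N = 0, r 0%N = g, p 0%N = - g,
      ~ (quad Hbar (p 0%N) < eps * nrm (p 0%N) ^+ 2) &
      M 0%N = updM H M0 (p 0%N)] /\
    [/\
      (forall j : nat, (j < J)%N ->
        let alpha := nrm (r j) ^+ 2 / quad Hbar (p j) in
        [/\ y j.+1 = y j + alpha *: p j,
            r j.+1 = r j + alpha *: mv Hbar (p j),
            p j.+1 = - r j.+1 + (nrm (r j.+1) ^+ 2 / nrm (r j) ^+ 2) *: p j &
            M j.+1 = updM H (updM H (updM H (M j) (p j.+1)) (y j.+1)) (r j.+1)]),
      (1 <= J)%N &
        (forall j : nat, (1 <= j)%N -> (j < J)%N ->
          [/\ ~ (quad Hbar (y j) < eps * nrm (y j) ^+ 2),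
              ~ (nrm (r j) <= zhat (M j) * nrm (r 0%N)),
              ~ (quad Hbar (p j) < eps * nrm (p j) ^+ 2) &
              ~ (Num.sqrt (T (M j)) * Num.sqrt (tau (M j)) ^+ j * nrm (r 0%N)
                   < nrm (r j))])] /\
      [/\ ~ (quad Hbar (y J) < eps * nrm (y J) ^+ 2),
        nrm (r J) <= zhat (M J) * nrm (r 0%N) &
        d = y J].

Definition gvec n (lam : R) (gradx x : 'rV[R]_n) : 'rV[R]_n :=
  \row_i (if 0 < x 0 i then gradx 0 i + lam
          else if x 0 i < 0 then gradx 0 i - lam
          else gradx 0 i - Num.min (Num.max (- lam) (gradx 0 i)) lam).

Definition geps n (lam epsg : R) (gradx x : 'rV[R]_n) : 'rV[R]_n :=
  \row_i (if Num.sqrt epsg < x 0 i then gradx 0 i + lam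
          else if x 0 i < - Num.sqrt epsg then gradx 0 i - lam
          else gradx 0 i - Num.min (Num.max (- lam - epsg `^ (3/4)) (gradx 0 i))
                                    (lam + epsg `^ (3/4))).

Definition I0eps n (epsg : R) (x : 'rV[R]_n) : {set 'I_n} :=
  [set i | `|x 0 i| <= Num.sqrt epsg].
Definition Inz n (epsg : R) (x : 'rV[R]_n) : {set 'I_n} :=
  [set i | Num.sqrt epsg < `|x 0 i|].

(** selection matrix of an index set I : v *m (selmx I)^T = v_I, and
    u *m selmx I is u (indexed by I) extended by zero outside I. *)
Definition selmx n (I : {set 'I_n}) : 'M[R]_(#|I|, n) :=
  \matrix_(a, i) ((enum_val a == i)%:R).

End PGN2CM.

Definition phiobj (R : realType) n (f : 'rV[R]_n -> R) (lam : R) (x : 'rV[R]_n) : R :=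
  f x + lam * norm1 x.

Definition c_sol (R : realType) (LH zeta tauhat eta theta : R) : R :=
  eta * Num.min
    (Num.min ((4 / (Num.sqrt ((zeta + 4 * tauhat) ^+ 2 + 8 * LH) + (zeta + 4 * tauhat))) ^+ 2)
             (9 * (1 - zeta - 2 * eta) ^+ 2 * theta ^+ 2 / LH ^+ 2))
    (Num.min (theta ^+ 2)
             ((1 - zeta) ^+ 2 * theta ^+ 2 / (4 * Num.max (LH / 3) (2 * eta) ^+ 2))).

(* Capped CG stops with SOL only when its residual r satisfies
   |r| <= (zeta/2) eps_h |d| and d has curvature at least eps_h for the shifted
   reduced Hessian H + s I, with 2 eps_h <= s <= 2 tauhat eps_h.  Hence the slope
   of phi along d_k is at most -(1 - zeta/2) eps_h |d|^2.  As long as a step t d_k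
   changes no sign of the coordinates in I, phi is smooth along the segment, so the
   line-search test holds for all small steps and j_k is finite.  For the decrease:
   - a step that changes a sign has length > eps_g^(1/2); this gives eps_g eps_h;
   - an accepted unit step without sign change gives
     |g^(k+1)| <= (zeta + 4 tauhat)/2 eps_h |d| + L_H/2 |d|^2, and z, the positive
     root of L_H z^2 + (zeta + 4 tauhat) z = 2, converts this into the terms
     |g^(k+1)|^2 / eps_h and eps_h^3;
   - a rejected step t without sign change satisfies
     3 (2 - zeta) eps_h <= L_H t^2 |d| by the cubic upper model of f, which gives
     eps_h^3.  The cubic model only holds on the level set; when the rejected point
     leaves it, the intermediate value theorem provides a shorter rejected step
     inside it. *)

From HB Require Import structures.
From mathcomp Require Import all_boot all_order all_algebra.
From mathcomp Require Import all_classical all_reals all_analysis.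
From mathcomp Require Import ring lra.
Import Order.TTheory GRing.Theory Num.Theory.
Import numFieldNormedType.Exports.
Local Open Scope ring_scope.
Local Open Scope classical_set_scope.

Set Implicit Arguments. Unset Strict Implicit. Unset Printing Implicit Defensive.

Section Euclidean.
Variables (R : realType) (m : nat).
Implicit Types (u v w : 'rV[R]_m) (H : 'M[R]_m) (a : R).

Lemma dotvE u v : dotv u v = \sum_i u 0 i * v 0 i.
Proof. by rewrite /dotv !mxE; apply: eq_bigr => i _; rewrite mxE. Qed.

Lemma dotvC u v : dotv u v = dotv v u.
Proof. by rewrite !dotvE; apply: eq_bigr => i _; rewrite mulrC. Qed.

Lemma dotvDl u v w : dotv (u + v) w = dotv u w + dotv v w.
Proof. by rewrite !dotvE -big_split; apply: eq_bigr => i _; rewrite mxE mulrDl. Qed.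

Lemma dotvDr u v w : dotv w (u + v) = dotv w u + dotv w v.
Proof. by rewrite dotvC dotvDl !(dotvC w). Qed.

Lemma dotvZl a u w : dotv (a *: u) w = a * dotv u w.
Proof. by rewrite !dotvE mulr_sumr; apply: eq_bigr => i _; rewrite mxE mulrA. Qed.

Lemma dotvZr a u w : dotv w (a *: u) = a * dotv w u.
Proof. by rewrite dotvC dotvZl dotvC. Qed.

Lemma dotvBl u v w : dotv (u - v) w = dotv u w - dotv v w.
Proof. by rewrite -scaleN1r dotvDl dotvZl mulN1r. Qed.

Lemma dotvBr u v w : dotv w (u - v) = dotv w u - dotv w v.
Proof. by rewrite dotvC dotvBl !(dotvC w). Qed.

Lemma dotv0r w : dotv w 0 = 0.
Proof. by rewrite dotvE big1 // => i _; rewrite mxE mulr0. Qed.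

Lemma dotvv_ge0 v : 0 <= dotv v v.
Proof. by rewrite dotvE; apply: sumr_ge0 => i _; rewrite -expr2 sqr_ge0. Qed.

Lemma dotvv_eq0 v : dotv v v = 0 -> v = 0.
Proof.
rewrite dotvE => /psumr_eq0P v0; apply/rowP => i; rewrite mxE.
have /eqP := v0 (fun j _ => sqr_ge0 (v 0 j)) i isT.
by rewrite mulf_eq0 orbb => /eqP.
Qed.

Lemma nrm_ge0 v : 0 <= nrm v.
Proof. exact: sqrtr_ge0. Qed.

Lemma nrm_sqr v : nrm v ^+ 2 = dotv v v.
Proof. by rewrite sqr_sqrtr // dotvv_ge0. Qed.

Lemma nrm0 : nrm (0 : 'rV[R]_m) = 0.
Proof. by rewrite /nrm dotv0r sqrtr0. Qed.

Lemma nrm_eq0 v : nrm v = 0 -> v = 0.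
Proof. by move=> v0; apply: dotvv_eq0; rewrite -nrm_sqr v0 expr0n. Qed.

Lemma cauchy_schwarz u v : dotv u v <= nrm u * nrm v.
Proof.
have nu := nrm_ge0 u; have nv := nrm_ge0 v.
suff : dotv u v ^+ 2 <= (nrm u * nrm v) ^+ 2.
  by move=> h; have := mulr_ge0 nu nv; nra.
rewrite exprMn !nrm_sqr.
have [B0|Bneq0] := eqVneq (dotv v v) 0.
  by rewrite B0 (dotvv_eq0 B0) dotv0r expr0n mulr0.
have Bgt0 : 0 < dotv v v by rewrite lt0r Bneq0 dotvv_ge0.
have := dotvv_ge0 (dotv v v *: u - dotv u v *: v).
rewrite !(dotvBl, dotvBr, dotvZl, dotvZr) (dotvC v u); nra.
Qed.

Lemma nrmD u v : nrm (u + v) <= nrm u + nrm v.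
Proof.
have := cauchy_schwarz u v; have := nrm_ge0 (u + v).
have nu := nrm_ge0 u; have nv := nrm_ge0 v.
have : nrm (u + v) ^+ 2 = nrm u ^+ 2 + 2 * dotv u v + nrm v ^+ 2.
  by rewrite !nrm_sqr dotvDl !dotvDr (dotvC v u); ring.
nra.
Qed.

Lemma nrmZ a v : nrm (a *: v) = `|a| * nrm v.
Proof.
by rewrite /nrm dotvZl dotvZr mulrA -expr2 sqrtrM ?sqr_ge0 // sqrtr_sqr.
Qed.

Lemma nrmB u v : nrm (u - v) <= nrm u + nrm v.
Proof. by rewrite -scaleN1r; apply: le_trans (nrmD _ _) _; rewrite nrmZ normrN1 mul1r. Qed.

Lemma norm_entry_le_nrm v i : `|v 0 i| <= nrm v.
Proof.
rewrite -[`|v 0 i|]sqrtr_sqr /nrm; apply: ler_wsqrtr.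
rewrite dotvE (bigD1 i) //= -expr2 lerDl.
by apply: sumr_ge0 => j _; exact: sqr_ge0.
Qed.

Lemma mvD H u v : mv H (u + v) = mv H u + mv H v.
Proof. by rewrite /mv linearD /= mulmxDr linearD. Qed.

Lemma mvZ H a v : mv H (a *: v) = a *: mv H v.
Proof. by rewrite /mv linearZ /= -scalemxAr linearZ. Qed.

Lemma mv0 H : mv H 0 = 0.
Proof. by rewrite /mv linear0 mulmx0 linear0. Qed.

Lemma mvDl H1 H2 v : mv (H1 + H2) v = mv H1 v + mv H2 v.
Proof. by rewrite /mv mulmxDl linearD. Qed.

Lemma mv_scalar a v : mv a%:M v = a *: v.
Proof. by rewrite /mv mul_scalar_mx linearZ /= trmxK. Qed.

Lemma quad_shift H a v : quad (H + a%:M) v = quad H v + a * nrm v ^+ 2.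
Proof. by rewrite /quad mvDl mv_scalar dotvDr dotvZr nrm_sqr. Qed.

Lemma quadZ H a v : quad H (a *: v) = a ^+ 2 * quad H v.
Proof. by rewrite /quad mvZ dotvZl dotvZr mulrA expr2. Qed.

End Euclidean.

Section Selection.
Variables (R : realType) (n : nat) (I : {set 'I_n}).
Local Notation P := (selmx R I).
Implicit Types (u : 'rV[R]_n) (v : 'rV[R]_#|I|).

Lemma selmx_mul_tr : P *m P^T = 1%:M.
Proof.
apply/matrixP => a b; rewrite !mxE (bigD1 (enum_val a)) //= big1 ?addr0.
  by rewrite !mxE eqxx mul1r (inj_eq enum_val_inj) eq_sym.
by move=> i /negbTE hi; rewrite !mxE eq_sym hi mul0r.
Qed.

Lemma selmx_tr_entry u a : (u *m P^T) 0 a = u 0 (enum_val a).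
Proof.
rewrite mxE (bigD1 (enum_val a)) //= big1 ?addr0; first by rewrite !mxE eqxx mulr1.
by move=> i /negbTE hi; rewrite !mxE eq_sym hi mulr0.
Qed.

Lemma eq_selmx_tr u1 u2 :
  (forall i, i \in I -> u1 0 i = u2 0 i) -> u1 *m P^T = u2 *m P^T.
Proof. by move=> eq12; apply/rowP => a; rewrite !selmx_tr_entry eq12 ?enum_valP. Qed.

Lemma selmx_entry_out v i : i \notin I -> (v *m P) 0 i = 0.
Proof.
move=> iI; rewrite mxE big1 // => b _; rewrite mxE.
have /negbTE -> : enum_val b != i by apply: contraNneq iI => <-; exact: enum_valP.
by rewrite mulr0.
Qed.

Lemma dotv_selmx v1 v2 : dotv (v1 *m P) (v2 *m P) = dotv v1 v2.
Proof. by rewrite /dotv trmx_mul mulmxA -(mulmxA v1) selmx_mul_tr mulmx1. Qed.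

Lemma dotv_selmx_r u v : dotv u (v *m P) = dotv (u *m P^T) v.
Proof. by rewrite /dotv trmx_mul mulmxA. Qed.

Lemma mv_selmx (H : 'M[R]_n) v : mv H (v *m P) *m P^T = mv (P *m H *m P^T) v.
Proof. by rewrite /mv !trmx_mul !trmxK !mulmxA. Qed.

Lemma quad_selmx (H : 'M[R]_n) v : quad H (v *m P) = quad (P *m H *m P^T) v.
Proof. by rewrite /quad dotvC dotv_selmx_r mv_selmx dotvC. Qed.

Lemma nrm_selmx v : nrm (v *m P) = nrm v.
Proof. by rewrite /nrm dotv_selmx. Qed.

Lemma nrm_selmx_tr_le u : nrm (u *m P^T) <= nrm u.
Proof.
rewrite /nrm; apply: ler_wsqrtr; rewrite !dotvE.
under eq_bigr => a _ do rewrite selmx_tr_entry.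
rewrite -(big_enum_val (A := mem I) (fun i => u 0 i * u 0 i)) /=.
rewrite [X in _ <= X](bigID (mem I)) /= lerDl.
by apply: sumr_ge0 => i _; exact: sqr_ge0.
Qed.

End Selection.

Section Signs.
Variable R : realType.
Implicit Types (a t lam epsg : R).

Definition sgnv n (x : 'rV[R]_n) : 'rV[R]_n := \row_i sgn (x 0 i).

Lemma abs_add_small a t : `|t| < `|a| -> `|a + t| = `|a| + sgn a * t.
Proof.
have := ler_norm t; have := ler_norm (- t); rewrite normrN /sgn.
case: (lerP 0 a) => a0; [rewrite (ger0_norm a0) | rewrite (ltr0_norm a0)] => tn1 tn2 ta.
  by rewrite mul1r ger0_norm //; lra.
by rewrite mulN1r ltr0_norm //; lra.
Qed.

Lemma sgn_add_small a t : `|t| < `|a| -> sgn (a + t) = sgn a.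
Proof.
have := ler_norm t; have := ler_norm (- t); rewrite normrN /sgn.
case: (lerP 0 a) => a0; [rewrite (ger0_norm a0) | rewrite (ltr0_norm a0)] => tn1 tn2 ta.
  by rewrite ifT //; lra.
by rewrite ifF //; apply/negbTE; rewrite -ltNge; lra.
Qed.

Lemma norm1_add_small n (x v : 'rV[R]_n) :
  (forall i, v 0 i = 0 \/ `|v 0 i| < `|x 0 i|) ->
  norm1 (x + v) = norm1 x + dotv (sgnv x) v.
Proof.
move=> small; rewrite /norm1 dotvE -big_split; apply: eq_bigr => i _ /=.
rewrite !mxE; case: (small i) => [->|vx]; first by rewrite !(addr0, mulr0).
exact: abs_add_small.
Qed.

Lemma gvec_entry n lam (gx x : 'rV[R]_n) i :
  x 0 i != 0 -> gvec lam gx x 0 i = gx 0 i + lam * sgn (x 0 i).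
Proof.
by rewrite /gvec /sgn mxE; case: ltrgtP; rewrite ?mulr1 ?mulrN1.
Qed.

Lemma geps_entry n lam epsg (gx x : 'rV[R]_n) i :
  Num.sqrt epsg < `|x 0 i| -> geps lam epsg gx x 0 i = gx 0 i + lam * sgn (x 0 i).
Proof.
rewrite /geps /sgn mxE => big; have := sqrtr_ge0 epsg.
case: (lerP 0 (x 0 i)) => x0; [rewrite (ger0_norm x0) in big | rewrite (ltr0_norm x0) in big].
  by rewrite big mulr1.
move=> sq0; rewrite ifF ?ifT ?mulrN1 //; first lra.
by apply/negbTE; rewrite -leNgt; lra.
Qed.

Lemma geps_selmx n lam epsg (gx x : 'rV[R]_n) (P := selmx R (Inz epsg x)) :
  geps lam epsg gx x *m P^T = (gx + lam *: sgnv x) *m P^T.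
Proof.
apply: eq_selmx_tr => i; rewrite inE => big.
by rewrite geps_entry // !mxE.
Qed.

Lemma gvec_selmx_add_small n lam (I : {set 'I_n}) (gy x v : 'rV[R]_n)
    (P := selmx R I) :
  (forall i, i \in I -> `|v 0 i| < `|x 0 i|) ->
  gvec lam gy (x + v) *m P^T = (gy + lam *: sgnv x) *m P^T.
Proof.
move=> small; apply: eq_selmx_tr => i iI.
have xv := small i iI; rewrite gvec_entry; last first.
  by rewrite mxE -normr_gt0; apply: lt_le_trans (lerB_normD _ _); rewrite subr_gt0.
by rewrite !mxE sgn_add_small.
Qed.

End Signs.

Section CappedCG.
Variables (R : realType) (m : nat).
Implicit Types (H : 'M[R]_m) (v g d : 'rV[R]_m).

Lemma le_updM H M v : M <= updM H M v.
Proof.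
rewrite /updM; case: ifPn => // grow.
have [v0|vneq0] := eqVneq (nrm v) 0.
  by move: grow; rewrite v0 (nrm_eq0 v0) mv0 nrm0 mulr0 ltxx.
by rewrite ler_pdivlMr ?ltW // lt0r vneq0 nrm_ge0.
Qed.

Lemma nrm_mv_le_updM H M v : nrm (mv H v) <= updM H M v * nrm v.
Proof.
rewrite /updM; case: ifPn => [grow|]; last by rewrite -leNgt.
have [v0|vneq0] := eqVneq (nrm v) 0.
  by move: grow; rewrite v0 (nrm_eq0 v0) mv0 nrm0 mulr0 ltxx.
by rewrite divfK.
Qed.

Lemma CappedCG_SOL_residual H g eps zeta delta taubar M0 d
    (s := taubar * nrm g `^ delta) :
  0 <= M0 -> CappedCG_SOL H g eps zeta delta taubar M0 d ->
  exists r MJ, [/\ g = r - mv (H + s%:M) d, eps * nrm d ^+ 2 <= quad (H + s%:M) d,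
    nrm r <= zeta / (3 * ((MJ + s) / eps)) * nrm g,
    nrm (mv H d) <= MJ * nrm d & 0 <= MJ].
Proof.
rewrite /CappedCG_SOL -/s => M0_ge0.
move=> [y [r [p [M [J [[y0 r0 _ _ MM0] [[step J_ge1 _] [curv res ->]]]]]]]].
have residual j : (j <= J)%N -> r j - mv (H + s%:M) (y j) = g.
  elim: j => [|j IH] jJ; first by rewrite y0 r0 mv0 subr0.
  have [-> -> _ _] := step j jJ.
  by rewrite mvD mvZ -IH ?(ltnW jJ) // opprD addrACA subrr addr0.
have M_ge0 j : (j <= J)%N -> 0 <= M j.
  elim: j => [|j IH] jJ; first by rewrite MM0; apply: le_trans M0_ge0 (le_updM _ _ _).
  have [_ _ _ ->] := step j jJ.
  by apply: le_trans (IH (ltnW jJ)) _; do 3 apply: le_trans (le_updM _ _ _).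
exists (r J), (M J); split.
- by rewrite residual.
- by rewrite leNgt; apply/negP.
- by rewrite -r0.
- (* M_J was last updated with y_J, which requires J >= 1. *)
  case: J J_ge1 step {curv res residual M_ge0} => // J _ step.
  have [_ _ _ ->] := step J (ltnSn J).
  apply: le_trans (nrm_mv_le_updM _ (updM H (M J) (p J.+1)) _) _.
  by rewrite ler_wpM2r ?nrm_ge0 ?le_updM.
- exact: M_ge0.
Qed.

Lemma CappedCG_SOL_descent H g eps zeta delta taubar M0 d
    (s := taubar * nrm g `^ delta) :
  0 <= M0 -> 0 < eps -> 0 < zeta < 1 -> 2 * eps <= s -> 0 < nrm g ->
  CappedCG_SOL H g eps zeta delta taubar M0 d ->
  exists r, [/\ 0 < nrm d, g = r - mv (H + s%:M) d,
    nrm r <= zeta / 2 * eps * nrm d & eps * nrm d ^+ 2 <= quad (H + s%:M) d].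
Proof.
move=> M0_ge0 eps_gt0 /andP[zeta_gt0 zeta_lt1] s_ge g_gt0 /CappedCG_SOL_residual.
move=> /(_ M0_ge0) [r [MJ [gE curv res Hd MJ_ge0]]]; exists r.
have s_ge0 : 0 <= s by lra.
have K_gt0 : 0 < MJ + s by lra.
have nd := nrm_ge0 d; have nr := nrm_ge0 r.
have g_le : nrm g <= nrm r + (MJ + s) * nrm d.
  rewrite gE; apply: le_trans (nrmB _ _) _; rewrite lerD2l mvDl mv_scalar.
  by apply: le_trans (nrmD _ _) _; rewrite nrmZ ger0_norm // mulrDl lerD2r.
have {}res : 3 * (MJ + s) * nrm r <= zeta * eps * nrm g.
  have -> : zeta * eps * nrm g = 3 * (MJ + s) * (zeta / (3 * ((MJ + s) / eps)) * nrm g).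
    by field; rewrite !gt_eqF.
  by rewrite ler_wpM2l // ltW // mulr_gt0.
have small : nrm r <= zeta / 2 * eps * nrm d.
  have : 3 * (MJ + s) * nrm r <= zeta * eps * (nrm r + (MJ + s) * nrm d).
    by apply: le_trans res _; rewrite ler_wpM2l // mulr_ge0 //; lra.
  have : 0 <= (MJ + s - zeta * eps) * nrm r by rewrite mulr_ge0 //; nra.
  move=> h1 h2; rewrite -(ler_pM2l K_gt0); lra.
split=> //; rewrite lt0r nd andbT; apply/eqP => d0.
by move: g_le small; rewrite d0 !mulr0 addr0; lra.
Qed.

End CappedCG.

Lemma exists_expr_lt (R : realType) (q e : R) : 0 < q < 1 -> 0 < e -> exists j, q ^+ j < e.
Proof.
move=> /andP[q0 q1] e0.
have /cvg_expr/cvgr0_norm_lt/(_ e e0) [N _ near_q] : `|q| < 1 by rewrite gtr0_norm.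
by exists N; have := near_q N (leqnn N); rewrite /= normrX gtr0_norm.
Qed.

Lemma continuous_along (R : realType) n (f : 'rV[R]_n -> R) x v :
  (forall y, differentiable f y) -> continuous (fun t : R => f (x + t *: v)).
Proof.
move=> f_diff t; apply: continuous_comp; last exact: differentiable_continuous.
by apply: cvgD; [exact: cvg_cst | apply: cvgZr_tmp; exact: cvg_id].
Qed.

Lemma derivable_increment_lt (R : realType) n (f : 'rV[R]_n -> R) x v e :
  derivable f x v -> 0 < e -> exists2 del : R, 0 < del &
    forall h, 0 < h < del -> f (x + h *: v) - f x < h * ('D_v f x + e).
Proof.
move=> /cvgr_dist_lt/(_ e) f_der e_gt0; have := f_der e_gt0.
move=> /nbhs_ballP [del del_gt0 near_f]; exists del => // h /andP[h_gt0 h_lt].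
have /near_f : ball 0 del h by rewrite /ball /= sub0r normrN gtr0_norm.
move=> /(_ (lt0r_neq0 h_gt0)) /=; rewrite [h *: v + x]addrC.
rewrite -/(derive f x v) distrC => /(le_lt_trans (ler_norm _)).
set q := f _ - f x; rewrite ltrBlDr -(ltr_pM2l h_gt0) => lt.
by rewrite addrC; move: lt; rewrite [h^-1 *: q]/(h^-1 * q) mulVKf ?gt_eqF.
Qed.

Section Estimates.
Variable R : realType.
Implicit Types (b L e w z g u t c : R).

Definition zroot b L : R := 4 / (Num.sqrt (b ^+ 2 + 8 * L) + b).

Lemma zroot_gt0 b L : 0 < b -> 0 <= L -> 0 < zroot b L.
Proof. by move=> b0 L0; rewrite divr_gt0 // ltr_wpDl ?sqrtr_ge0. Qed.

Lemma zroot_root b L : 0 < b -> 0 <= L -> L * zroot b L ^+ 2 + b * zroot b L = 2.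
Proof.
move=> b0 L0; rewrite /zroot; set S := Num.sqrt _; set z := 4 / _.
have S2 : S ^+ 2 = b ^+ 2 + 8 * L by rewrite sqr_sqrtr // addr_ge0 ?sqr_ge0 ?mulr_ge0.
have zS : z * S = 4 - z * b.
  by rewrite -[4](@divfK _ (S + b)) ?gt_eqF ?ltr_wpDl ?sqrtr_ge0 // -/z; ring.
have : (z * S) ^+ 2 = z ^+ 2 * (b ^+ 2 + 8 * L) by rewrite exprMn S2.
by rewrite zS => sq; lra.
Qed.

Lemma zroot_min_le b L e w g : 0 < b -> 0 <= L -> 0 < e -> 0 < w -> 0 <= g ->
  g <= b / 2 * e * w + L / 2 * w ^+ 2 ->
  zroot b L ^+ 2 * Num.min (g ^+ 2 / e) (e ^+ 3) <= e * w ^+ 2.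
Proof.
move=> b0 L0 e0 w0 g0 g_le; have z0 := zroot_gt0 b0 L0.
have root := zroot_root b0 L0; set z := zroot b L in z0 root *; clearbody z.
have [zew|wze] := lerP (z * e) w.
  apply: le_trans (_ : _ <= z ^+ 2 * e ^+ 3) _.
    by rewrite ler_wpM2l ?sqr_ge0 // ge_min lexx orbT.
  have : (z * e) ^+ 2 <= w ^+ 2 by rewrite !expr2 ler_pM // mulr_ge0 // ltW.
  by rewrite exprMn -(ler_pM2l e0); congr (_ <= _); ring.
apply: le_trans (_ : _ <= z ^+ 2 * (g ^+ 2 / e)) _.
  by rewrite ler_wpM2l ?sqr_ge0 // ge_min lexx.
have zg : z * g <= e * w.
  apply: le_trans (ler_wpM2l (ltW z0) g_le) _.
  have : L / 2 * z * w * w <= L / 2 * z * w * (z * e).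
    by apply: ler_wpM2l (ltW wze); rewrite !mulr_ge0 ?divr_ge0 // ltW.
  have : e * w / 2 * (L * z ^+ 2 + b * z) = e * w by rewrite root; field.
  by move=> eq; nra.
have : (z * g) ^+ 2 <= (e * w) ^+ 2 by rewrite !expr2 ler_pM // mulr_ge0 // ltW.
have ie0 : 0 < e^-1 by rewrite invr_gt0.
rewrite -(ler_pM2r ie0); congr (_ <= _); first by rewrite exprMn mulrA.
by field; rewrite gt_eqF.
Qed.

Lemma cubic_rejection_bound e z et s Q g w u L :
  0 < e -> 0 <= et <= 1 / 2 -> 2 * e <= s -> e * w ^+ 2 <= Q ->
  g <= z / 2 * e * w ^+ 2 - Q -> 0 < u <= 1 -> 0 < w ->
  - (et * u ^+ 2 * e * w ^+ 2) <=
    u * g + 1 / 2 * (u ^+ 2 * (Q - s * w ^+ 2)) + L / 6 * (u * w) ^+ 3 ->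
  3 * (2 - z) * e <= L * u ^+ 2 * w.
Proof.
move=> e0 /andP[et0 et1] s_ge Q_ge g_le /andP[u0 u1] w0 rejected.
have uw0 : 0 < u * w ^+ 2 / 6 by rewrite !mulr_gt0 ?exprn_gt0.
rewrite -(ler_pM2r uw0).
have := ler_wpM2l (ltW u0) g_le.
have : 0 <= u * ((Q - e * w ^+ 2) * (1 - u / 2)).
  by apply: mulr_ge0; [exact: ltW | apply: mulr_ge0; lra].
have : 0 <= (s - 2 * e) * (u * w) ^+ 2 by rewrite mulr_ge0 ?sqr_ge0 ?subr_ge0.
have : 0 <= (1 / 2 - et) * (u ^+ 2 * e * w ^+ 2).
  by apply: mulr_ge0; [lra | rewrite mulr_ge0 ?sqr_ge0 // mulr_ge0 ?sqr_ge0 ?ltW].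
lra.
Qed.

Lemma sqr_div_cube_le c L e t w : 0 < e -> 0 < L -> 0 <= c -> 0 <= t <= 1 ->
  c * e <= L * t ^+ 2 * w -> c ^+ 2 / L ^+ 2 * e ^+ 3 <= t ^+ 2 * e * w ^+ 2.
Proof.
move=> e0 L0 c0 /andP[t0 t1] le_ce.
have ce0 : 0 <= c * e by rewrite mulr_ge0 // ltW.
have sq : (c * e) ^+ 2 <= (L * t ^+ 2 * w) ^+ 2 by rewrite !expr2 ler_pM.
have t4 : t ^+ 4 <= t ^+ 2 by rewrite (exprD t 2 2) ler_piMr ?sqr_ge0 // expr_le1.
have -> : c ^+ 2 / L ^+ 2 * e ^+ 3 = e / L ^+ 2 * (c * e) ^+ 2.
  by field; rewrite gt_eqF.
have -> : t ^+ 2 * e * w ^+ 2 = e / L ^+ 2 * (L ^+ 2 * w ^+ 2 * t ^+ 2).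
  by field; rewrite gt_eqF.
apply: ler_wpM2l; first by rewrite divr_ge0 ?sqr_ge0 // ltW.
apply: (le_trans sq).
have -> : (L * t ^+ 2 * w) ^+ 2 = L ^+ 2 * w ^+ 2 * t ^+ 4 by ring.
by rewrite ler_wpM2l // mulr_ge0 ?sqr_ge0.
Qed.

Lemma c_sol_min_le LH zeta tauhat eta theta a b c :
  0 <= eta -> 0 <= a -> 0 <= b -> 0 <= c ->
  let cm := c_sol LH zeta tauhat eta theta * Num.min (Num.min a b) c in
  [/\ cm <= eta * (zroot (zeta + 4 * tauhat) LH ^+ 2 * Num.min a b),
      cm <= eta * (9 * (1 - zeta - 2 * eta) ^+ 2 * theta ^+ 2 / LH ^+ 2 * b) &
      cm <= eta * (theta ^+ 2 * c)].
Proof.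
move=> eta0 a0 b0 c0 cm; rewrite /cm /c_sol -/(zroot _ _) -mulrA.
set A := zroot _ _ ^+ 2; set B := 9 * _ * _ / _; set C := (1 - zeta) ^+ 2 * _ / _.
have A0 : 0 <= A by exact: sqr_ge0.
have B0 : 0 <= B by apply: divr_ge0; [apply: mulr_ge0; [apply: mulr_ge0|] |]; rewrite ?sqr_ge0.
have C0 : 0 <= C by apply: divr_ge0; apply: mulr_ge0; rewrite ?sqr_ge0.
have T0 : 0 <= theta ^+ 2 by exact: sqr_ge0.
have mul_min_le x y : Num.min (Num.min A B) (Num.min (theta ^+ 2) C) <= x ->
    Num.min (Num.min a b) c <= y -> 0 <= y ->
    eta * (Num.min (Num.min A B) (Num.min (theta ^+ 2) C) * Num.min (Num.min a b) c)
      <= eta * (x * y).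
  move=> xle yle y0; apply: ler_wpM2l => //; apply: ler_pM => //.
    by rewrite !le_min A0 B0 T0 C0.
  by rewrite !le_min a0 b0 c0.
split; apply: mul_min_le; rewrite ?le_min ?ge_min ?lexx ?orbT ?a0 ?b0 //.
Qed.

End Estimates.

Section NewtonSOLStep.
Variables (R : realType) (n : nat) (f : 'rV[R]_n -> R) (grad : 'rV[R]_n -> 'rV[R]_n)
  (hess : 'rV[R]_n -> 'M[R]_n) (x0 xk : 'rV[R]_n)
  (lam LH epsg epsh tauhat zeta eta theta s : R) (d r : 'rV[R]_#|Inz epsg xk|).

Local Notation phi := (phiobj f lam).
Local Notation Lset := [set x | phi x <= phi x0].
Local Notation I := (Inz epsg xk).
Local Notation P := (selmx R I).
Local Notation gk := (geps lam epsg (grad xk) xk *m P^T).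
Local Notation Hk := (P *m hess xk *m P^T).

Hypotheses (f_diff : forall x, differentiable f x)
  (f_grad : forall x v, 'D_v f x = dotv (grad x) v).
Hypothesis LH_gt0 : 0 < LH.
Hypothesis grad_taylor : forall x y, Lset x -> Lset y ->
  nrm (mv (hess x) (y - x) - (grad y - grad x)) <= LH / 2 * nrm (y - x) ^+ 2.
Hypothesis f_taylor : forall x y, Lset x -> Lset y ->
  f y <= f x + dotv (grad x) (y - x) + 1 / 2 * quad (hess x) (y - x)
         + LH / 6 * nrm (y - x) ^+ 3.
Hypotheses (epsg_gt0 : 0 < epsg) (epsh_gt0 : 0 < epsh).
Hypotheses (zeta_gt0 : 0 < zeta) (zeta_lt1 : zeta < 1).
Hypotheses (eta_gt0 : 0 < eta) (eta_lt : eta < (1 - zeta) / 2).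
Hypotheses (theta_gt0 : 0 < theta) (theta_lt1 : theta < 1).
Hypothesis Lxk : Lset xk.

Local Notation w := (nrm d).
Local Notation dk := (d *m P).
Local Notation Q := (quad (Hk + s%:M) d).
Hypotheses (d_gt0 : 0 < w) (shift_ge : 2 * epsh <= s) (shift_le : s <= 2 * tauhat * epsh).
Hypotheses (gk_residual : gk = r - mv (Hk + s%:M) d)
  (residual_le : nrm r <= zeta / 2 * epsh * w).
Hypothesis curvature_ge : epsh * w ^+ 2 <= Q.

Lemma nrm_dk : nrm dk = w.
Proof. exact: nrm_selmx. Qed.

Lemma slope_le : dotv gk d <= zeta / 2 * epsh * w ^+ 2 - Q.
Proof.
rewrite gk_residual dotvC dotvBr -/(quad _ d) lerD2r.
apply: le_trans (cauchy_schwarz _ _) _.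
by rewrite expr2 mulrA [w * _]mulrC ler_wpM2r ?nrm_ge0.
Qed.

Lemma slope_le_neg : dotv gk d <= - (1 - zeta / 2) * epsh * w ^+ 2.
Proof. by have := slope_le; have := curvature_ge; lra. Qed.

Lemma slopeE : dotv (grad xk) dk + lam * dotv (sgnv xk) dk = dotv gk d.
Proof. by rewrite -dotvZl -dotvDl dotv_selmx_r geps_selmx. Qed.

Definition keeps_signs t := forall i, i \in I -> t * `|dk 0 i| < `|xk 0 i|.

Lemma keeps_signs_small t : 0 <= t -> t * w <= Num.sqrt epsg -> keeps_signs t.
Proof.
move=> t0 tw i; rewrite inE; apply: le_lt_trans; apply: le_trans tw.
by rewrite ler_wpM2l // -nrm_dk norm_entry_le_nrm.
Qed.

Lemma keeps_signsW t u : 0 <= t -> t <= u -> keeps_signs u -> keeps_signs t.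
Proof. by move=> t0 tu keep i iI; apply: le_lt_trans (keep i iI); rewrite ler_wpM2r. Qed.

Lemma not_keeps_signs_long t : 0 <= t -> ~ keeps_signs t -> epsg < (t * w) ^+ 2.
Proof.
move=> t0 changes; rewrite ltNge; apply/negP => short; apply/changes/keeps_signs_small => //.
rewrite -(ger0_norm (mulr_ge0 t0 (nrm_ge0 d))) -sqrtr_sqr.
exact: ler_wsqrtr.
Qed.

Lemma phi_along t : 0 <= t -> keeps_signs t ->
  phi (xk + t *: dk) = f (xk + t *: dk) + lam * (norm1 xk + t * dotv (sgnv xk) dk).
Proof.
move=> t0 keep; rewrite /phiobj norm1_add_small ?dotvZr // => i.
rewrite mxE; case: (boolP (i \in I)) => iI; last by left; rewrite selmx_entry_out ?mulr0.
by right; rewrite normrM (ger0_norm t0); exact: keep.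
Qed.

Lemma armijo_near0 : exists2 del : R, 0 < del & forall h, 0 < h < del ->
  phi (xk + h *: dk) < phi xk - eta * h ^+ 2 * epsh * w ^+ 2.
Proof.
set g := dotv gk d; have w2 : 0 < w ^+ 2 by rewrite exprn_gt0.
have g_lt0 : g < 0.
  have : 0 < (2 - zeta) * (epsh * w ^+ 2).
    by rewrite !mulr_gt0 // subr_gt0; have := zeta_lt1; lra.
  by have := slope_le_neg; rewrite -/g; lra.
have g2 : 0 < - g / 2 by lra.
have [del1 del1_gt0 incr] := derivable_increment_lt (diff_derivable (v := dk) (f_diff xk)) g2.
rewrite f_grad in incr; set c := dotv (sgnv xk) dk in incr *.
have del2_gt0 : 0 < Num.sqrt epsg / w by rewrite divr_gt0 // sqrtr_gt0.
have del3_gt0 : 0 < - g / (2 * eta * epsh * w ^+ 2).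
  by rewrite divr_gt0 ?oppr_gt0 // !mulr_gt0.
exists (Num.min del1 (Num.min (Num.sqrt epsg / w) (- g / (2 * eta * epsh * w ^+ 2)))).
  by rewrite !lt_min del1_gt0 del2_gt0 del3_gt0.
move=> h /andP[h0]; rewrite !lt_min => /and3P[h_del1 h_sq h_g].
rewrite phi_along ?(ltW h0) //; last first.
  by apply: keeps_signs_small; [exact: ltW | rewrite -ler_pdivlMr // ltW].
have := incr h (ltac:(by rewrite h0 h_del1)).
rewrite ltr_pdivlMr ?mulr_gt0 // -(ltr_pM2l h0) in h_g.
have : h * (dotv (grad xk) dk + lam * c) = h * g by rewrite slopeE.
rewrite /phiobj -/c; lra.
Qed.

Lemma armijo_accepts : exists j : nat,
  phi (xk + theta ^+ j *: dk) < phi xk - eta * theta ^+ (2 * j) * epsh * nrm dk ^+ 2.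
Proof.
have [del del_gt0 armijo] := armijo_near0.
have [j theta_j] := @exists_expr_lt R theta del (ltac:(by rewrite theta_gt0)) del_gt0.
exists j; rewrite nrm_dk mulnC exprM; apply: armijo.
by rewrite exprn_gt0.
Qed.

Lemma rejected_in_level t : 0 < t -> keeps_signs t ->
    phi xk - eta * t ^+ 2 * epsh * w ^+ 2 <= phi (xk + t *: dk) ->
  exists u, [/\ 0 < u <= t, phi xk - eta * u ^+ 2 * epsh * w ^+ 2 <= phi (xk + u *: dk)
    & Lset (xk + u *: dk)].
Proof.
move=> t0 keep rejected.
have [inL|outL] := lerP (phi (xk + t *: dk)) (phi x0); first by exists t; rewrite t0 lexx.
have [del del_gt0 armijo] := armijo_near0.
set u := Num.min (del / 2) (t / 2).
have u0 : 0 < u by rewrite lt_min !divr_gt0.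
have u_del : u < del by rewrite gt_min; apply/orP; left; lra.
have u_t : u < t by rewrite gt_min; apply/orP; right; lra.
pose F t := f (xk + t *: dk) + lam * (norm1 xk + t * dotv (sgnv xk) dk).
have F_cont : continuous F.
  move=> v; apply: cvgD; first exact: continuous_along.
  apply: cvgM; first exact: cvg_cst.
  by apply: cvgD; [exact: cvg_cst | apply: cvgM; [exact: cvg_id | exact: cvg_cst]].
have phiF v : 0 <= v <= t -> phi (xk + v *: dk) = F v.
  by move=> /andP[v0 vt]; apply: phi_along => //; exact: keeps_signsW keep.
have penalty_ge0 v : 0 <= eta * v ^+ 2 * epsh * w ^+ 2.
  exact: mulr_ge0 (mulr_ge0 (mulr_ge0 (ltW eta_gt0) (sqr_ge0 v)) (ltW epsh_gt0)) (sqr_ge0 _).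
have Fu : F u < phi x0.
  rewrite -phiF ?(ltW u0) ?(ltW u_t) //; apply: lt_le_trans (armijo u _) _.
    by rewrite u0.
  by have := penalty_ge0 u; move: Lxk => /=; lra.
have Ft : phi x0 < F t by rewrite -phiF ?lexx // ltW.
have F_between : Num.min (F u) (F t) <= phi x0 <= Num.max (F u) (F t).
  by rewrite ge_min le_max (ltW Fu) (ltW Ft) orbT.
have [v] := IVT (ltW u_t) (continuous_subspaceT F_cont) F_between.
rewrite in_itv /= => /andP[uv vt] Fv.
have v0 : 0 < v by exact: lt_le_trans uv.
exists v; split; rewrite ?v0 ?vt //= phiF ?vt ?(ltW v0) // Fv //.
by have := penalty_ge0 v; move: Lxk => /=; lra.
Qed.

Lemma rejected_step_long t : 0 < t <= 1 -> keeps_signs t ->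
    phi xk - eta * t ^+ 2 * epsh * w ^+ 2 <= phi (xk + t *: dk) ->
  3 * (2 - zeta) * epsh <= LH * t ^+ 2 * w.
Proof.
move=> /andP[t0 t1] keep rejected.
have [u [/andP[u0 ut] rejected_u Lu]] := rejected_in_level t0 keep rejected.
have step : xk + u *: dk - xk = u *: dk by rewrite addrAC subrr add0r.
have := f_taylor Lxk Lu; rewrite step dotvZr quadZ nrmZ (ger0_norm (ltW u0)).
rewrite nrm_dk quad_selmx -[quad Hk d](addrK (s * w ^+ 2)) -quad_shift => taylor.
have keep_u := keeps_signsW (ltW u0) ut keep.
rewrite phi_along ?(ltW u0) // in rejected_u.
have slope : u * (dotv (grad xk) dk + lam * dotv (sgnv xk) dk) = u * dotv gk d.
  by rewrite slopeE.
have eta_le : 0 <= eta <= 1 / 2.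
  by rewrite (ltW eta_gt0) /=; have := eta_lt; have := zeta_gt0; lra.
have u_le1 : 0 < u <= 1 by rewrite u0 (le_trans ut t1).
have model : - (eta * u ^+ 2 * epsh * w ^+ 2) <=
    u * dotv gk d + 1 / 2 * (u ^+ 2 * (Q - s * w ^+ 2)) + LH / 6 * (u * w) ^+ 3.
  by move: rejected_u; rewrite /phiobj; lra.
have := cubic_rejection_bound epsh_gt0 eta_le shift_ge curvature_ge slope_le u_le1 d_gt0 model.
move=> /le_trans; apply.
by rewrite ler_wpM2r ?nrm_ge0 // ler_wpM2l ?(ltW LH_gt0) // !expr2 ler_pM // ltW.
Qed.

Lemma next_gradient_le : keeps_signs 1 -> Lset (xk + dk) ->
  nrm (gvec lam (grad (xk + dk)) (xk + dk) *m P^T)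
    <= (zeta + 4 * tauhat) / 2 * epsh * w + LH / 2 * w ^+ 2.
Proof.
move=> keep L1; rewrite gvec_selmx_add_small; last by move=> i /keep; rewrite mul1r.
set e := mv (hess xk) dk - (grad (xk + dk) - grad xk).
have e_le : nrm e <= LH / 2 * w ^+ 2.
  by have := grad_taylor Lxk L1; rewrite addrAC subrr add0r nrm_dk.
have -> : grad (xk + dk) + lam *: sgnv xk = grad xk + lam *: sgnv xk + mv (hess xk) dk - e.
  by apply/rowP => i; rewrite !mxE; ring.
rewrite mulmxBl mulmxDl -geps_selmx mv_selmx gk_residual mvDl mv_scalar.
rewrite opprD addrA addrAC subrK.
apply: le_trans (nrmB _ _) _; apply: le_trans (lerD (nrmB _ _) (nrm_selmx_tr_le _ _)) _.
rewrite nrmZ ger0_norm; last by have := shift_ge; have := epsh_gt0; lra.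
have := ler_wpM2r (nrm_ge0 d) shift_le; move: residual_le e_le; lra.
Qed.

Local Notation lower_bound g := (c_sol LH zeta tauhat eta theta *
  Num.min (Num.min (nrm g ^+ 2 / epsh) (epsh ^+ 3)) (epsg * epsh)).

Lemma decrease_unit_step : phi (xk + dk) < phi xk - eta * epsh * w ^+ 2 ->
  lower_bound (gvec lam (grad (xk + dk)) (xk + dk) *m P^T) <= phi xk - phi (xk + dk).
Proof.
move=> accepted; set g1 := gvec _ _ _ *m _.
have eh3 : 0 <= epsh ^+ 3 by rewrite exprn_ge0 // ltW.
have ee : 0 <= epsg * epsh by rewrite mulr_ge0 // ltW.
have g1e : 0 <= nrm g1 ^+ 2 / epsh by rewrite divr_ge0 ?sqr_ge0 // ltW.
have [bound_z _ bound_eps] := c_sol_min_le LH zeta tauhat theta (ltW eta_gt0) g1e eh3 ee.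
have decrease : eta * (epsh * w ^+ 2) < phi xk - phi (xk + dk) by rewrite mulrA; lra.
apply: le_trans _ (ltW decrease); case: (pselect (keeps_signs 1)) => [keep|changes].
  have L1 : Lset (xk + dk).
    have : 0 <= eta * (epsh * w ^+ 2) by rewrite !mulr_ge0 ?sqr_ge0 // ltW.
    by move: Lxk => /=; lra.
  apply: (le_trans bound_z); rewrite ler_wpM2l ?(ltW eta_gt0) //.
  apply: zroot_min_le; rewrite ?nrm_ge0 ?(ltW LH_gt0) ?next_gradient_le //.
  by rewrite addr_gt0 // mulr_gt0 //; have := shift_ge; have := shift_le; have := epsh_gt0; nra.
have := not_keeps_signs_long ler01 changes; rewrite mul1r => long.
apply: (le_trans bound_eps); rewrite ler_wpM2l ?(ltW eta_gt0) //.
have : epsg * epsh <= epsh * w ^+ 2 by rewrite mulrC ler_wpM2l // ltW.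
by apply: le_trans; rewrite ler_piMl // expr_le1 // ltW.
Qed.

Lemma decrease_backtracked t (g : 'rV[R]_#|I|) : 0 < t <= 1 ->
    phi xk - eta * t ^+ 2 * epsh * w ^+ 2 <= phi (xk + t *: dk) ->
  lower_bound g <= eta * (theta ^+ 2 * (t ^+ 2 * epsh * w ^+ 2)).
Proof.
move=> /andP[t0 t1] rejected.
have eh3 : 0 <= epsh ^+ 3 by rewrite exprn_ge0 // ltW.
have ee : 0 <= epsg * epsh by rewrite mulr_ge0 // ltW.
have ge : 0 <= nrm g ^+ 2 / epsh by rewrite divr_ge0 ?sqr_ge0 // ltW.
have [_ bound_cube bound_eps] := c_sol_min_le LH zeta tauhat theta (ltW eta_gt0) ge eh3 ee.
case: (pselect (keeps_signs t)) => [keep|changes].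
  (* c_sol only uses the weaker constant 3 (1 - zeta - 2 eta) <= 3 (2 - zeta). *)
  have c0 : 0 <= 3 * (1 - zeta - 2 * eta) by have := eta_lt; lra.
  have : 3 * (1 - zeta - 2 * eta) * epsh <= LH * t ^+ 2 * w.
    apply: le_trans (rejected_step_long _ keep rejected); last by rewrite t0.
    by rewrite ler_wpM2r ?(ltW epsh_gt0) //; have := eta_gt0; lra.
  move=> /(sqr_div_cube_le epsh_gt0 LH_gt0 c0); rewrite (ltW t0) t1 => /(_ isT) long.
  apply: (le_trans bound_cube); rewrite ler_wpM2l ?(ltW eta_gt0) //.
  have -> : 9 * (1 - zeta - 2 * eta) ^+ 2 * theta ^+ 2 / LH ^+ 2 * epsh ^+ 3 =
    theta ^+ 2 * ((3 * (1 - zeta - 2 * eta)) ^+ 2 / LH ^+ 2 * epsh ^+ 3) by ring.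
  by rewrite ler_wpM2l ?sqr_ge0.
have := not_keeps_signs_long (ltW t0) changes => long.
apply: (le_trans bound_eps); rewrite ler_wpM2l ?(ltW eta_gt0) // ler_wpM2l ?sqr_ge0 //.
have -> : t ^+ 2 * epsh * w ^+ 2 = (t * w) ^+ 2 * epsh by ring.
by rewrite ler_wpM2r // ltW.
Qed.

Lemma decrease_lower_bound jk :
  phi (xk + theta ^+ jk *: dk) < phi xk - eta * theta ^+ (2 * jk) * epsh * nrm dk ^+ 2 ->
  (forall j, (j < jk)%N ->
    ~ phi (xk + theta ^+ j *: dk) < phi xk - eta * theta ^+ (2 * j) * epsh * nrm dk ^+ 2) ->
  lower_bound (gvec lam (grad (xk + theta ^+ jk *: dk)) (xk + theta ^+ jk *: dk) *m P^T)
    <= phi xk - phi (xk + theta ^+ jk *: dk).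
Proof.
rewrite nrm_dk; case: jk => [|j] accepted earlier.
  rewrite expr0 scale1r; apply: decrease_unit_step.
  by rewrite muln0 expr0 mulr1 scale1r in accepted.
have := earlier j (ltnSn j); rewrite mulnC exprM => /negP; rewrite -leNgt => rejected.
have theta_j : 0 < theta ^+ j <= 1 by rewrite exprn_gt0 // exprn_ile1 // ltW.
apply: le_trans (decrease_backtracked _ theta_j rejected) (ltW _).
by move: accepted; rewrite mulnC exprM exprSr exprMn; lra.
Qed.

End NewtonSOLStep.

Theorem lemma10 (R : realType) (n : nat) (lam : R) (f : 'rV[R]_n -> R)
    (grad : 'rV[R]_n -> 'rV[R]_n) (hess : 'rV[R]_n -> 'M[R]_n)
    (x0 xk : 'rV[R]_n) (Lg LH Ug : R)
    (epsg epsh delta tauhat zeta eta theta tauk M : R)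
    (d : 'rV[R]_#|Inz epsg xk|) :
  let phi := phiobj f lam in
  let Lset := [set x | phi x <= phi x0] in
  (* lambda > 0, f twice continuously differentiable with gradient grad and Hessian hess *)
  0 < lam ->
  (forall x, differentiable f x) ->
  (forall x v, 'D_v f x = dotv (grad x) v) ->
  (forall x, differentiable grad x) ->
  (forall x v, 'D_v grad x = mv (hess x) v) ->
  continuous hess ->
  (* the level set is bounded *)
  (exists B : R, forall x, Lset x -> nrm x <= B) ->
  (* f is twice uniformly Lipschitz continuously differentiable on an open neighborhood *)
  (exists U : set 'rV[R]_n, [/\ open U, Lset `<=` U &
     exists L : R, forall x y, U x -> U y -> forall v,
       nrm (mv (hess x - hess y) v) <= L * nrm (x - y) * nrm v]) ->
  (* the constants L_g, L_H, U_g *)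
  0 < Lg -> 0 < LH -> 0 < Ug ->
  (forall x y, Lset x -> Lset y ->
     nrm (mv (hess x) (y - x) - (grad y - grad x)) <= LH / 2 * nrm (y - x) ^+ 2) ->
  (forall x y, Lset x -> Lset y ->
     f y <= f x + dotv (grad x) (y - x) + 1 / 2 * quad (hess x) (y - x)
            + LH / 6 * nrm (y - x) ^+ 3) ->
  (forall x, Lset x -> nrm (grad x) <= Ug) ->
  (forall x, Lset x -> forall v, nrm (mv (hess x) v) <= Lg * nrm v) ->
  (* parameters of PGN2CM *)
  0 < epsg < 1 -> 0 < epsh < 1 -> 0 <= delta <= 1 -> 1 <= tauhat ->
  0 < zeta < 1 -> 0 < eta < (1 - zeta) / 2 -> 0 < theta < 1 ->
  (* the k-th iterate lies in the level set *)
  Lset xk ->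
  let I := Inz epsg xk in
  let P := selmx R I in
  let gk := geps lam epsg (grad xk) xk *m P^T in
  let Hk := P *m hess xk *m P^T in
  (* conditions under which the Newton-CG step is invoked *)
  (I0eps epsg xk = finset.set0 \/
     (forall i, i \in I0eps epsg xk -> geps lam epsg (grad xk) xk 0 i = 0)) ->
  I != finset.set0 ->
  epsg < nrm gk ->
  2 * epsh / nrm gk `^ delta <= tauk <= 2 * tauhat * epsh / nrm gk `^ delta ->
  0 <= M ->
  (* Capped CG returns (d, SOL) *)
  CappedCG_SOL Hk gk epsh zeta delta tauk M d ->
  let dk := d *m P in
  let accept (j : nat) :=
    phi (xk + theta ^+ j *: dk) < phi xk - eta * theta ^+ (2 * j) * epsh * nrm dk ^+ 2 in
  (exists j : nat, accept j) /\
  (forall jk : nat, accept jk -> (forall j : nat, (j < jk)%N -> ~ accept j) ->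
     let xk1 := xk + theta ^+ jk *: dk in
     let gk1 := gvec lam (grad xk1) xk1 *m P^T in
     phi xk - phi xk1 >=
       c_sol LH zeta tauhat eta theta *
         Num.min (Num.min (nrm gk1 ^+ 2 / epsh) (epsh ^+ 3)) (epsg * epsh)).
Proof.
move=> phi Lset _ f_diff f_grad _ _ _ _ _ _ LH_gt0 _ grad_taylor f_taylor _ _.
move=> /andP[epsg_gt0 _] /andP[epsh_gt0 _] _ _ /andP[zeta_gt0 zeta_lt1].
move=> /andP[eta_gt0 eta_lt] /andP[theta_gt0 theta_lt1] Lxk I P gk Hk _ _ gk_gt.
move=> /andP[tauk_lo tauk_hi] M_ge0 capped dk accept.
set s := tauk * nrm gk `^ delta.
have gk_gt0 : 0 < nrm gk := lt_trans epsg_gt0 gk_gt.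
have pow_gt0 : 0 < nrm gk `^ delta by apply: powR_gt0.
have shift_ge : 2 * epsh <= s by rewrite /s -ler_pdivrMr // mulrC.
have shift_le : s <= 2 * tauhat * epsh by rewrite /s -ler_pdivlMr // mulrC.
have zeta01 : 0 < zeta < 1 by rewrite zeta_gt0.
have [r [d_gt0 gk_residual residual_le curvature_ge]] :=
  CappedCG_SOL_descent M_ge0 epsh_gt0 zeta01 shift_ge gk_gt0 capped.
split.
  by apply: (armijo_accepts (grad := grad) (hess := hess) (zeta := zeta) (s := s) (r := r)).
by move=> jk; apply: (decrease_lower_bound (x0 := x0) (hess := hess) (s := s) (r := r)).
Qed.
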